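(* Let $L$ be a combinatorial tiling locally isomorphic to $K$, let $v$ be a vertex of $L$ and $n>0$. Let $B_d(v,n,L)$ denote the set of points $u$ of the 1-skeleton of $L_{\mathrm{aff}}$ with $d(v,u)\le n$, and $B_{d'}(v,n,L)$ the set of points $u$ of the 1-skeleton with $d'(v,u)\le n$. Then $B_{d'}(v,n,L)\subset B_d(v,n,L)$ and $B_d(v,n,L)\subset B_{d'}(v,3n,L)$.
   Context: A combinatorial tiling is a 2-dimensional CW-complex homeomorphic to the plane. The combinatorial pentagonal tiling $K$ is built as follows: $K_0$ is a (decorated) combinatorial pentagon, i.e. a space homeomorphic to the closed disk with five distinguished boundary points; the pentagonal subdivision rule $\omega$ replaces each pentagon $t$ by a supertile $\omega(t)$ consisting of six pentagons (a central pentagon surrounded by a ring of five, combinatorially half a dodecahedron), each edge of $t$ being split into two edges, with decorations of the subtiles prescribed by the rule (finitely many decorated prototiles); $K_n:=\omega^n(K_0)$, embeddings $\iota_n:K_n\to K_{n+1}$ send the central pentagon to the central pentagon, and $K:=\varinjlim K_n$. A combinatorial tiling $L$ is locally isomorphic to $K$ if every finite patch of $L$ is isomorphic, via a cell-preserving decoration-preserving isomorphism, to a patch of $K$. For such $L$, $L_{\mathrm{aff}}$ is $L$ with the metric making each edge isometric to $[0,1]$ and each face isometric to a Euclidean regular pentagon of side $1$; $d$ is the length of a shortest path in $L_{\mathrm{aff}}$. The unit-edge metric $d'$ on the 1-skeleton is the length of a shortest path within the 1-skeleton, each edge having length $1$. *)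

From mathcomp Require Import all_boot.
From Stdlib Require Import Reals List Relations.
Set Implicit Arguments.
Unset Strict Implicit.
Unset Printing Implicit Defensive.

(* Pentagonal 2-complexes: every 2-cell is a combinatorial pentagon   *)
(* whose five distinguished boundary points are its vertices, listed  *)
(* in cyclic order by [pcor f : 'I_5 -> pV].  Edges are the pairs of  *)
(* cyclically consecutive corners of faces.                           *)
Record pcx := PCx { pV : Type; pF : Type; pcor : pF -> 'I_5 -> pV }.

Definition side (X : pcx) (f : pF X) (i : 'I_5) (a b : pV X) : Prop :=
  (pcor f i = a /\ pcor f (ordS i) = b) \/ (pcor f i = b /\ pcor f (ordS i) = a).

Definition side_in (X : pcx) (f : pF X) (a b : pV X) : Prop :=
  exists i, side f i a b.

Definition adj (X : pcx) (a b : pV X) : Prop := exists f, side_in f a b.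

Definition corners_distinct (X : pcx) := forall f : pF X, injective (pcor f).

(* every edge lies on exactly two faces (surface without boundary) *)
Definition edge_two_faces (X : pcx) :=
  forall a b : pV X, adj a b ->
    exists f g, f <> g /\ side_in f a b /\ side_in g a b /\
      forall h, side_in h a b -> h = f \/ h = g.

(* the faces around each vertex form a single finite cycle (disk link) *)
Definition vertex_wheels (X : pcx) :=
  forall (f0 : pF X) (i0 : 'I_5), let v := pcor f0 i0 in
    exists k (fs : 'I_k -> pF X) (ws : 'I_k -> pV X),
      (2 <= k)%nat /\ injective fs /\ injective ws /\
      (forall j, side_in (fs j) v (ws j) /\ side_in (fs j) v (ws (ordS j))) /\
      (forall g i, pcor g i = v -> exists j, fs j = g).

Definition connected_cx (X : pcx) :=
  forall (f g : pF X) i j, clos_refl_trans _ (@adj X) (pcor f i) (pcor g j).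

Fixpoint is_edge_path (X : pcx) (a : pV X) (p : list (pV X)) : Prop :=
  match p with
  | nil => True
  | b :: p' => adj a b /\ is_edge_path b p'
  end.

Definition face_loop (X : pcx) (f : pF X) (i : 'I_5) (dir : bool) : list (pV X) :=
  let nx := if dir then @ordS 5 else @ord_pred 5 in
  [:: pcor f i; pcor f (nx i); pcor f (nx (nx i)); pcor f (nx (nx (nx i)));
      pcor f (nx (nx (nx (nx i)))); pcor f i].

Definition htpy_step (X : pcx) (p q : list (pV X)) : Prop :=
  (exists p1 p2 a b, adj a b /\ p = p1 ++ a :: b :: a :: p2 /\ q = p1 ++ a :: p2)
  \/ (exists p1 p2 f i dir, p = p1 ++ pcor f i :: p2 /\
        q = p1 ++ face_loop f i dir ++ p2).

Definition simply_connected_cx (X : pcx) :=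
  forall (a : pV X) p, is_edge_path a p -> seq.last a p = a ->
    clos_refl_sym_trans _ (@htpy_step X) (a :: p) [:: a].

Definition infinite_cx (X : pcx) := ~ exists s : list (pF X), forall f, In f s.

(* a combinatorial tiling: a pentagonal 2-complex homeomorphic to the plane
   (connected, simply connected, non-compact surface without boundary) *)
Definition comb_tiling (X : pcx) :=
  corners_distinct X /\ edge_two_faces X /\ vertex_wheels X /\
  connected_cx X /\ simply_connected_cx X /\ infinite_cx X.

Record fcx := FCx { fV : finType; fF : finType; fcor : fF -> 'I_5 -> fV }.
Definition to_pcx (X : fcx) : pcx := @PCx (fV X) (fF X) (@fcor X).
Coercion to_pcx : fcx >-> pcx.

Definition subV (X : fcx) : finType := ((fV X + {set fV X}) + (fF X * 'I_5))%type.
Definition subF (X : fcx) : finType := (fF X * 'I_6)%type.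

(* old vertices, edge midpoints (the edge {a,b} is named by its endpoint set),
   and the five new interior vertices of each supertile *)
Definition s_old (X : fcx) (v : fV X) : subV X := inl (inl v).
Definition s_mid (X : fcx) (a b : fV X) : subV X := inl (inr [set a; b]).
Definition s_cen (X : fcx) (f : fF X) (j : 'I_5) : subV X := inr (f, j).

(* omega(t): central pentagon (index 5) with corners c_0..c_4, and for j < 5
   the ring pentagon [c_j; c_{j+1}; m_{j+1}; v_{j+1}; m_j], where v_i are the
   corners of t and m_i the midpoint of its side v_i v_{i+1}: half a dodecahedron
   whose boundary v_0 m_0 v_1 m_1 ... consists of the split sides of t. *)
Definition subcor (X : fcx) (t : subF X) (i : 'I_5) : subV X :=
  let: (f, k) := t in
  let v := fcor f in
  if (k : nat) == 5%nat then s_cen f i else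
  let j : 'I_5 := inord k in
  let m := fun l : 'I_5 => s_mid (v l) (v (ordS l)) in
  match (i : nat) with
  | 0 => s_cen f j
  | 1 => s_cen f (ordS j)
  | 2 => m (ordS j)
  | 3 => s_old (v (ordS j))
  | _ => m j
  end%nat.

Definition subdiv (X : fcx) : fcx := @FCx (subV X) (subF X) (@subcor X).

Definition K0 : fcx := @FCx 'I_5 unit (fun _ i => i).

Fixpoint Kn (n : nat) : fcx :=
  match n with 0 => K0 | n'.+1 => subdiv (Kn n') end.

Definition finite_faces (X : pcx) (P : pF X -> Prop) :=
  exists s : list (pF X), forall f, P f -> In f s.

Definition rot (r i : 'I_5) : 'I_5 := inord ((r + i) %% 5).
Definition refl5 (i : 'I_5) : 'I_5 := inord ((5 - i) %% 5).

(* cell-preserving isomorphism between the patch (finite union of tiles) P of X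
   and the patch Q of Y; pentagons are matched up to a dihedral relabelling of
   their five distinguished points *)
Definition patch_iso (X Y : pcx) (P : pF X -> Prop) (Q : pF Y -> Prop) :=
  exists (phi : pV X -> pV Y) (psi : pF X -> pF Y),
    (forall f, P f -> Q (psi f)) /\
    (forall f g, P f -> P g -> psi f = psi g -> f = g) /\
    (forall g, Q g -> exists f, P f /\ psi f = g) /\
    (forall f g i j, P f -> P g -> phi (pcor f i) = phi (pcor g j) ->
        pcor f i = pcor g j) /\
    (forall f, P f -> exists r : 'I_5,
        (forall i, pcor (psi f) (rot r i) = phi (pcor f i)) \/
        (forall i, pcor (psi f) (rot r (refl5 i)) = phi (pcor f i))).

(* K = lim K_n (with K_n embedded centrally in K_(n+1)); a finite patch of K
   is a finite patch of some K_n *)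
Definition loc_iso_K (L : pcx) :=
  forall P : pF L -> Prop, finite_faces P ->
    exists n (Q : pF (Kn n) -> Prop), patch_iso P Q.

Open Scope R_scope.

Definition pt := (R * R)%type.
Definition circ_rad : R := / (2 * sin (PI / 5)).
(* the vertices of the standard regular pentagon of side 1 *)
Definition pvert (k : 'I_5) : pt :=
  (circ_rad * cos (2 * PI * INR k / 5), circ_rad * sin (2 * PI * INR k / 5)).

Definition in_pent (x : pt) : Prop :=
  exists l : 'I_5 -> R, (forall k, 0 <= l k) /\
    l (inord 0) + l (inord 1) + l (inord 2) + l (inord 3) + l (inord 4) = 1 /\
    x = (l (inord 0) * fst (pvert (inord 0)) + l (inord 1) * fst (pvert (inord 1))
         + l (inord 2) * fst (pvert (inord 2)) + l (inord 3) * fst (pvert (inord 3))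
         + l (inord 4) * fst (pvert (inord 4)),
         l (inord 0) * snd (pvert (inord 0)) + l (inord 1) * snd (pvert (inord 1))
         + l (inord 2) * snd (pvert (inord 2)) + l (inord 3) * snd (pvert (inord 3))
         + l (inord 4) * snd (pvert (inord 4))).

Definition edist (x y : pt) : R :=
  sqrt ((fst x - fst y) ^ 2 + (snd x - snd y) ^ 2).

Definition side_pt (i : 'I_5) (s : R) : pt :=
  ((1 - s) * fst (pvert i) + s * fst (pvert (ordS i)),
   (1 - s) * snd (pvert i) + s * snd (pvert (ordS i))).

(* points of the 1-skeleton: the point at parameter t of the edge from a to b *)
Record skel (X : pcx) := Sk { sa : pV X; sb : pV X; st : R }.

Definition skel_ok (X : pcx) (u : skel X) :=
  adj (sa u) (sb u) /\ 0 <= st u <= 1.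

Definition skel_eq (X : pcx) (u u' : skel X) : Prop :=
  (st u = 0 /\ st u' = 0 /\ sa u = sa u') \/
  (st u = 0 /\ st u' = 1 /\ sa u = sb u') \/
  (st u = 1 /\ st u' = 0 /\ sb u = sa u') \/
  (st u = 1 /\ st u' = 1 /\ sb u = sb u') \/
  (sa u = sa u' /\ sb u = sb u' /\ st u = st u') \/
  (sa u = sb u' /\ sb u = sa u' /\ st u = 1 - st u').

(* the point x of the (regular, side 1) pentagon f is the skeleton point u *)
Definition fp_at_skel (X : pcx) (f : pF X) (x : pt) (u : skel X) : Prop :=
  exists (i : 'I_5) s, 0 <= s <= 1 /\ x = side_pt i s /\
    skel_eq (Sk (pcor f i) (pcor f (ordS i)) s) u.

Definition same_fp (X : pcx) (f : pF X) (x : pt) (g : pF X) (y : pt) : Prop :=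
  (f = g /\ x = y) \/
  (exists u, skel_ok u /\ fp_at_skel f x u /\ fp_at_skel g y u).

(* piecewise linear paths in L_aff: segments inside single faces *)
Record aseg (X : pcx) := ASeg { asf : pF X; asx : pt; asy : pt }.

Fixpoint apath_from (X : pcx) (f : pF X) (x : pt) (l : list (aseg X)) (Q : skel X)
  : Prop :=
  match l with
  | nil => fp_at_skel f x Q
  | s :: l' => same_fp f x (asf s) (asx s) /\ in_pent (asx s) /\ in_pent (asy s) /\
               apath_from (asf s) (asy s) l' Q
  end.

Definition apath (X : pcx) (P : skel X) (l : list (aseg X)) (Q : skel X) : Prop :=
  match l with
  | nil => skel_eq P Q
  | s :: l' => fp_at_skel (asf s) (asx s) P /\ in_pent (asx s) /\ in_pent (asy s) /\
               apath_from (asf s) (asy s) l' Q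
  end.

Fixpoint alen (X : pcx) (l : list (aseg X)) : R :=
  match l with nil => 0 | s :: l' => edist (asx s) (asy s) + alen l' end.

(* d(P,Q) <= r  (d = infimum of lengths of paths in L_aff) *)
Definition aff_dist_le (X : pcx) (P Q : skel X) (r : R) : Prop :=
  forall eps, 0 < eps -> exists l, apath P l Q /\ alen l < r + eps.

(* paths in the 1-skeleton with unit edges *)
Record eseg (X : pcx) := ESeg { esa : pV X; esb : pV X; ess : R; est : R }.

Fixpoint spath (X : pcx) (cur : skel X) (l : list (eseg X)) (Q : skel X) : Prop :=
  match l with
  | nil => skel_eq cur Q
  | e :: l' => adj (esa e) (esb e) /\ 0 <= ess e <= 1 /\ 0 <= est e <= 1 /\
               skel_eq cur (Sk (esa e) (esb e) (ess e)) /\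
               spath (Sk (esa e) (esb e) (est e)) l' Q
  end.

Fixpoint slen (X : pcx) (l : list (eseg X)) : R :=
  match l with nil => 0 | e :: l' => Rabs (est e - ess e) + slen l' end.

Definition skel_dist_le (X : pcx) (P Q : skel X) (r : R) : Prop :=
  forall eps, 0 < eps -> exists l, spath P l Q /\ slen l < r + eps.

(* the vertex v, as a point of the 1-skeleton, via an edge vw *)
Definition vpt (X : pcx) (v w : pV X) : skel X := Sk v w 0.

Definition ball_d (X : pcx) (v w : pV X) (r : R) : skel X -> Prop :=
  fun u => skel_ok u /\ aff_dist_le (vpt v w) u r.
Definition ball_d' (X : pcx) (v w : pV X) (r : R) : skel X -> Prop :=
  fun u => skel_ok u /\ skel_dist_le (vpt v w) u r.

(* An edge path of the 1-skeleton is
   an affine path of the same length, since every edge is a unit side of a face,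
   so d <= d'.  Conversely, two boundary points of a regular unit pentagon at
   Euclidean distance delta are joined along the boundary by a path of length at
   most 3 delta: on a common side the lengths agree, on adjacent sides the
   interior angle of 108 degrees is obtuse, and on sides two apart delta >= 1
   while the boundary path is at most 3 long.  Replacing every segment of an
   affine path by such a boundary detour gives d' <= 3 d. *)

From mathcomp Require Import all_boot.
From Stdlib Require Import Reals Lra Psatz Rgeom.
Open Scope R_scope.
Set Implicit Arguments.
Unset Strict Implicit.

Definition cos5 := cos (2 * PI / 5).
Definition sin5 := sin (2 * PI / 5).
Definition rot5 (p : pt) : pt := (cos5 * fst p - sin5 * snd p, sin5 * fst p + cos5 * snd p).

Definition pent_pt (m : nat) : pt :=
  (circ_rad * cos (2 * PI * INR m / 5), circ_rad * sin (2 * PI * INR m / 5)).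

Lemma pent_pt_S m : pent_pt m.+1 = rot5 (pent_pt m).
Proof.
rewrite /pent_pt /rot5 /cos5 /sin5 S_INR /=.
have -> : 2 * PI * (INR m + 1) / 5 = 2 * PI * INR m / 5 + 2 * PI / 5 by field.
by rewrite cos_plus sin_plus; f_equal; ring.
Qed.

Lemma pent_pt_5 : pent_pt 5 = pent_pt 0.
Proof.
rewrite /pent_pt (_ : 2 * PI * INR 5 / 5 = 2 * PI); last by rewrite /=; field.
by rewrite (_ : 2 * PI * INR 0 / 5 = 0) ?cos_2PI ?sin_2PI ?cos_0 ?sin_0 //=; field.
Qed.

Lemma pvert_ordS k : pvert (ordS k) = rot5 (pvert k).
Proof.
rewrite -[pvert k]/(pent_pt k) -pent_pt_S.
by case: k => [[|[|[|[|[|m]]]]] Hm] //=; rewrite pent_pt_5.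
Qed.

Definition dot (p q : pt) : R := fst p * fst q + snd p * snd q.

Definition side_vec (k : 'I_5) : pt :=
  (fst (pvert (ordS k)) - fst (pvert k), snd (pvert (ordS k)) - snd (pvert k)).

Lemma cos5_ge0 : 0 <= cos5.
Proof. by apply: cos_ge_0; have := PI_RGT_0; lra. Qed.

Lemma dot_rot5 u : dot (rot5 u) (rot5 u) = dot u u.
Proof.
have := sin2_cos2 (2 * PI / 5); rewrite /dot /rot5 /cos5 /sin5 /Rsqr /=; nra.
Qed.

Lemma dot_rot5_r u : dot u (rot5 u) = cos5 * dot u u.
Proof. by rewrite /dot /rot5 /=; ring. Qed.

Lemma side_vec_ordS k : side_vec (ordS k) = rot5 (side_vec k).
Proof. by rewrite /side_vec !pvert_ordS /rot5 /=; f_equal; ring. Qed.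

Lemma side_vec0_norm : dot (side_vec ord0) (side_vec ord0) = 1.
Proof.
rewrite /side_vec pvert_ordS /pvert /rot5 /dot /cos5 /sin5 /circ_rad /=.
rewrite (_ : 2 * PI * 0 / 5 = 0); last by field.
rewrite cos_0 sin_0 (_ : 2 * PI / 5 = 2 * (PI / 5)); last by field.
have s_gt0 : 0 < sin (PI / 5) by apply: sin_gt_0; have := PI_RGT_0; lra.
have := sin2_cos2 (2 * (PI / 5)); rewrite cos_2a_sin /Rsqr.
set s := sin (PI / 5) in s_gt0 *; set S := sin (2 * (PI / 5)) => sc.
have SS : S * S = 4 * s * s - 4 * s * s * s * s by nra.
transitivity ((S * S + 4 * s * s * s * s) / (4 * s * s)); first by field; lra.
by rewrite SS; field; lra.
Qed.

Lemma side_vec_norm k : dot (side_vec k) (side_vec k) = 1.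
Proof.
case: k => m; elim: m => [|m IH] Hm.
  by rewrite -side_vec0_norm; do 2 f_equal; apply/val_inj.
have Hm' : (m < 5)%nat by apply: ltnW.
have -> : Ordinal Hm = ordS (Ordinal Hm') by apply/val_inj; rewrite /= modn_small.
by rewrite side_vec_ordS dot_rot5 IH.
Qed.

Lemma side_vec_dot_ordS k : dot (side_vec k) (side_vec (ordS k)) = cos5.
Proof. by rewrite side_vec_ordS dot_rot5_r side_vec_norm Rmult_1_r. Qed.

Lemma side_pt_eq i s :
  side_pt i s = (fst (pvert i) + s * fst (side_vec i), snd (pvert i) + s * snd (side_vec i)).
Proof. by rewrite /side_pt /side_vec /=; f_equal; ring. Qed.

Lemma pvert_ordS_eq i :
  pvert (ordS i) = (fst (pvert i) + fst (side_vec i), snd (pvert i) + snd (side_vec i)).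
Proof. by rewrite /side_vec; case: (pvert (ordS i)) => a b /=; f_equal; ring. Qed.

Lemma edist_ge_of_sqr r x y :
  0 <= r -> r ^ 2 <= (fst x - fst y) ^ 2 + (snd x - snd y) ^ 2 -> r <= edist x y.
Proof. by move=> r_ge0 le_r; rewrite -(sqrt_pow2 r r_ge0); apply: sqrt_le_1_alt. Qed.

Lemma edist_side_pt i s t : edist (side_pt i s) (side_pt i t) = Rabs (t - s).
Proof.
rewrite /edist -sqrt_Rsqr_abs /Rsqr !side_pt_eq; cbn [fst snd]; f_equal.
have := side_vec_norm i; rewrite /dot.
set p := fst (side_vec i); set q := snd (side_vec i) => n.
by rewrite -[(t - s) * (t - s)]Rmult_1_r -n; ring.
Qed.

Lemma edist_side_pt_ordS i s t : 0 <= s <= 1 -> 0 <= t <= 1 ->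
  ((1 - s) + t) / 3 <= edist (side_pt i s) (side_pt (ordS i) t).
Proof.
move=> s01 t01; apply: edist_ge_of_sqr; first lra.
have := side_vec_norm i; have := side_vec_norm (ordS i).
have := side_vec_dot_ordS i; have := cos5_ge0.
rewrite !side_pt_eq pvert_ordS_eq /dot; cbn [fst snd].
set p := fst (side_vec i); set q := snd (side_vec i).
set p' := fst (side_vec (ordS i)); set q' := snd (side_vec (ordS i)).
set a := 1 - s => c_ge0 pp' n' n.
have a_ge0 : 0 <= a by rewrite /a; lra.
have -> : (fst (pvert i) + s * p - (fst (pvert i) + p + t * p')) ^ 2
    + (snd (pvert i) + s * q - (snd (pvert i) + q + t * q')) ^ 2
  = a * a * (p * p + q * q) + t * t * (p' * p' + q' * q') + 2 * a * t * (p * p' + q * q')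
  by rewrite /a; ring.
rewrite n n' pp'.
have := Rmult_le_pos _ _ (Rmult_le_pos _ _ a_ge0 (proj1 t01)) c_ge0; clearbody a; nra.
Qed.

Lemma edist_side_pt_ordS2 i s t : 0 <= s <= 1 -> 0 <= t <= 1 ->
  1 <= edist (side_pt i s) (side_pt (ordS (ordS i)) t).
Proof.
move=> s01 t01; apply: edist_ge_of_sqr; first lra.
have := side_vec_norm (ordS i); have := side_vec_dot_ordS i.
have := side_vec_dot_ordS (ordS i); have := cos5_ge0.
rewrite !side_pt_eq !pvert_ordS_eq /dot; cbn [fst snd].
set p := fst (side_vec i); set q := snd (side_vec i).
set p' := fst (side_vec (ordS i)); set q' := snd (side_vec (ordS i)).
set p'' := fst (side_vec (ordS (ordS i))); set q'' := snd (side_vec (ordS (ordS i))).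
set a := 1 - s => c_ge0 p'p'' pp' n'.
have a_ge0 : 0 <= a by rewrite /a; lra.
set x := a * p + p' + t * p''; set y := a * q + q' + t * q''.
have -> : (fst (pvert i) + s * p - (fst (pvert i) + p + p' + t * p'')) ^ 2
    + (snd (pvert i) + s * q - (snd (pvert i) + q + q' + t * q'')) ^ 2 = x ^ 2 + y ^ 2
  by rewrite /x /y /a; ring.
(* The component of the chord along the middle side already has length at least 1. *)
have proj_ge1 : 1 <= x * p' + y * q'.
  have -> : x * p' + y * q'
      = a * (p * p' + q * q') + (p' * p' + q' * q') + t * (p' * p'' + q' * q'').
    by rewrite /x /y; ring.
  rewrite pp' n' p'p''.
  have := Rmult_le_pos _ _ a_ge0 c_ge0; have := Rmult_le_pos _ _ (proj1 t01) c_ge0; lra.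
have cauchy_schwarz : (x * p' + y * q') ^ 2 <= (x ^ 2 + y ^ 2) * (p' * p' + q' * q').
  have := pow2_ge_0 (x * q' - y * p'); nra.
rewrite n' in cauchy_schwarz; nra.
Qed.

Lemma edist_sym x y : edist x y = edist y x.
Proof. by rewrite /edist; f_equal; ring. Qed.

Lemma edist_xx x : edist x x = 0.
Proof. by rewrite /edist !Rminus_diag (_ : 0 ^ 2 + 0 ^ 2 = 0) ?sqrt_0 //; ring. Qed.

Lemma edist_triangle x y z : edist x z <= edist x y + edist y z.
Proof.
have E p q : edist p q = dist_euc (fst p) (snd p) (fst q) (snd q).
  by rewrite /edist /dist_euc /Rsqr; f_equal; ring.
by rewrite !E; apply: triangle.
Qed.

Lemma in_pent_side_pt i s : 0 <= s <= 1 -> in_pent (side_pt i s).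
Proof.
move=> s01.
exists (fun k : 'I_5 => if k == i :> nat then 1 - s else if k == ordS i :> nat then s else 0).
split; first by move=> k; case: ifP => _; [lra | case: ifP => _; lra].
rewrite /side_pt /pvert; cbv beta; rewrite !inordK //.
by case: i => [[|[|[|[|[|m]]]]] Hm] //=; split; try lra; f_equal; ring.
Qed.

Lemma ord5_within_two_steps (i j : 'I_5) :
  j = i \/ j = ordS i \/ j = ordS (ordS i) \/ i = ordS j \/ i = ordS (ordS j).
Proof.
have : [|| j == i, j == ordS i, j == ordS (ordS i), i == ordS j | i == ordS (ordS j)].
  by case: i j => [[|[|[|[|[|?]]]]] ?] [[|[|[|[|[|?]]]]] ?].
by case/or4P => [|||/orP[]] /eqP ->; auto.
Qed.

Ltac close_conj := solve [repeat split; first [reflexivity | lra | congruence | assumption]].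
Ltac skel_eq_case := first
  [ left; close_conj | right; left; close_conj | right; right; left; close_conj
  | right; right; right; left; close_conj | right; right; right; right; left; close_conj
  | right; right; right; right; right; close_conj ].

Section Skeleton.
Variable X : pcx.

Lemma skel_eq_refl (u : skel X) : skel_eq u u.
Proof. by case: u => a b t; rewrite /skel_eq /=; skel_eq_case. Qed.

Lemma skel_eq_sym (u u' : skel X) : skel_eq u u' -> skel_eq u' u.
Proof.
case: u u' => [a b t] [a' b' t']; rewrite /skel_eq /= => e.
by repeat match goal with H : _ \/ _ |- _ => destruct H | H : _ /\ _ |- _ => destruct H end;
  subst; skel_eq_case.
Qed.

Lemma skel_eq_trans (u u' u'' : skel X) : skel_eq u u' -> skel_eq u' u'' -> skel_eq u u''.
Proof.
case: u u' u'' => [a b t] [a' b' t'] [a'' b'' t'']; rewrite /skel_eq /= => e1 e2.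
by repeat match goal with H : _ \/ _ |- _ => destruct H | H : _ /\ _ |- _ => destruct H end;
  subst; skel_eq_case.
Qed.

Lemma spath_eq_l (A B C : skel X) l : skel_eq A B -> spath B l C -> spath A l C.
Proof.
case: l => [|e l] /=; first exact: skel_eq_trans.
by move=> AB [? [? [? [Be ?]]]]; repeat split => //; apply: skel_eq_trans AB Be.
Qed.

Lemma spath_cat (A B C : skel X) l1 l2 : spath A l1 B -> spath B l2 C -> spath A (l1 ++ l2) C.
Proof.
elim: l1 A => [|e l1 IH] A /=; first exact: spath_eq_l.
by move=> [? [? [? [? p1]]]] p2; repeat split => //; apply: IH p1 p2.
Qed.

Definition eseg_flip (e : eseg X) := ESeg (esb e) (esa e) (1 - est e) (1 - ess e).

Lemma spath_rev (A B : skel X) l : spath A l B -> spath B (rev (map eseg_flip l)) A.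
Proof.
elim: l A => [|e l IH] A /=; first exact: skel_eq_sym.
move=> [ab [s01 [t01 [Ae p]]]]; rewrite rev_cons -cats1.
apply: spath_cat (IH _ p) _ => /=.
have ba : adj (esb e) (esa e) by case: ab => f [i [? | ?]]; exists f, i; [right | left].
repeat split => //; try lra; first by rewrite /skel_eq /=; skel_eq_case.
by apply: skel_eq_trans (skel_eq_sym Ae); rewrite /skel_eq /=; skel_eq_case.
Qed.

Lemma slen_cat (l1 l2 : list (eseg X)) : slen (l1 ++ l2) = slen l1 + slen l2.
Proof. by elim: l1 => [|e l IH] /=; [ring | rewrite IH; ring]. Qed.

Lemma slen_rev_flip (l : list (eseg X)) : slen (rev (map eseg_flip l)) = slen l.
Proof.
elim: l => [|e l IH] //=; rewrite rev_cons -cats1 slen_cat IH /=.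
have -> : 1 - ess e - (1 - est e) = est e - ess e by ring.
ring.
Qed.

Definition skel_reach (A B : skel X) (r : R) := exists l, spath A l B /\ slen l <= r.

Lemma skel_reach_eq (A B : skel X) : skel_eq A B -> skel_reach A B 0.
Proof. by exists nil; split => //=; lra. Qed.

Lemma skel_reach_le (A B : skel X) r r' : skel_reach A B r -> r <= r' -> skel_reach A B r'.
Proof. by move=> [l [p lr]] rr'; exists l; split => //; lra. Qed.

Lemma skel_reach_trans (A B B' C : skel X) r1 r2 :
  skel_reach A B r1 -> skel_eq B B' -> skel_reach B' C r2 -> skel_reach A C (r1 + r2).
Proof.
move=> [l1 [p1 r1l]] BB' [l2 [p2 r2l]]; exists (l1 ++ l2); split.
  by apply: spath_cat p1 (spath_eq_l BB' p2).
by rewrite slen_cat; lra.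
Qed.

Lemma skel_reach_sym (A B : skel X) r : skel_reach A B r -> skel_reach B A r.
Proof.
move=> [l [p lr]]; exists (rev (map eseg_flip l)).
by rewrite slen_rev_flip; split => //; apply: spath_rev.
Qed.

Lemma adj_side (f : pF X) k : adj (pcor f k) (pcor f (ordS k)).
Proof. by exists f, k; left. Qed.

Definition side_skel (f : pF X) k s := Sk (pcor f k) (pcor f (ordS k)) s.

Lemma side_skel_end (f : pF X) k : skel_eq (side_skel f k 1) (side_skel f (ordS k) 0).
Proof. by rewrite /skel_eq /=; skel_eq_case. Qed.

Lemma skel_reach_side (f : pF X) k s t : 0 <= s <= 1 -> 0 <= t <= 1 ->
  skel_reach (side_skel f k s) (side_skel f k t) (Rabs (t - s)).
Proof.
move=> s01 t01; exists [:: ESeg (pcor f k) (pcor f (ordS k)) s t] => /=.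
split; last lra.
by repeat split; try lra; [apply: adj_side | apply: skel_eq_refl | apply: skel_eq_refl].
Qed.
End Skeleton.

Lemma skel_reach_side_pt (X : pcx) (f : pF X) i j s t : 0 <= s <= 1 -> 0 <= t <= 1 ->
  skel_reach (side_skel f i s) (side_skel f j t) (3 * edist (side_pt i s) (side_pt j t)).
Proof.
have l01 : 0 <= 0 <= 1 /\ 0 <= 1 <= 1 by lra.
have fwd i' s' j' t' : 0 <= s' <= 1 -> 0 <= t' <= 1 ->
    [\/ j' = i', j' = ordS i' | j' = ordS (ordS i')] ->
    skel_reach (side_skel f i' s') (side_skel f j' t')
      (3 * edist (side_pt i' s') (side_pt j' t')).
  move=> s01 t01 [->|->|->].
  - apply: skel_reach_le (skel_reach_side f i' s01 t01) _.
    by rewrite edist_side_pt; have := Rabs_pos (t' - s'); lra.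
  - have := skel_reach_trans (skel_reach_side f i' s01 (proj2 l01)) (side_skel_end f i')
      (skel_reach_side f (ordS i') (proj1 l01) t01).
    move/skel_reach_le; apply.
    by have := edist_side_pt_ordS i' s01 t01; rewrite !Rabs_right; lra.
  - have := skel_reach_trans (skel_reach_side f i' s01 (proj2 l01)) (side_skel_end f i')
      (skel_reach_trans (skel_reach_side f (ordS i') (proj1 l01) (proj2 l01))
         (side_skel_end f (ordS i')) (skel_reach_side f (ordS (ordS i')) (proj1 l01) t01)).
    move/skel_reach_le; apply.
    by have := edist_side_pt_ordS2 i' s01 t01; rewrite !Rabs_right; lra.
move=> s01 t01; case: (ord5_within_two_steps i j) => [|[|[|[]]]] e.
- by apply: fwd => //; apply: Or31.
- by apply: fwd => //; apply: Or32.
- by apply: fwd => //; apply: Or33.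
- by apply: skel_reach_sym; rewrite edist_sym; apply: fwd => //; apply: Or32.
- by apply: skel_reach_sym; rewrite edist_sym; apply: fwd => //; apply: Or33.
Qed.

Section AffineToSkeleton.
Variables (X : pcx) (P : skel X).

(* Invariant of an affine path that has travelled a length r and stands at the
   point x of face f. *)
Definition boundary_reach (f : pF X) (x : pt) (r : R) :=
  forall j t, 0 <= t <= 1 -> skel_reach P (side_skel f j t) (3 * (r + edist x (side_pt j t))).

Lemma boundary_reach_move f x y r :
  boundary_reach f x r -> boundary_reach f y (r + edist x y).
Proof.
move=> reach j t t01; apply: skel_reach_le (reach j t t01) _.
by have := edist_triangle x y (side_pt j t); lra.
Qed.

Lemma boundary_reach_of_skel g y u r :
  skel_reach P u (3 * r) -> fp_at_skel g y u -> boundary_reach g y r.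
Proof.
move=> Pu [i [s [s01 [-> us]]]] j t t01.
rewrite Rmult_plus_distr_l.
exact: skel_reach_trans Pu (skel_eq_sym us) (skel_reach_side_pt g i j s01 t01).
Qed.

Lemma skel_reach_of_boundary f x u r :
  boundary_reach f x r -> fp_at_skel f x u -> skel_reach P u (3 * r).
Proof.
move=> reach [i [s [s01 [xs us]]]]; rewrite xs in reach.
have := skel_reach_trans (reach i s s01) us (skel_reach_eq (skel_eq_refl u)).
by rewrite edist_xx !Rplus_0_r.
Qed.

Lemma skel_reach_of_apath_from l : forall f x r Q,
  boundary_reach f x r -> apath_from f x l Q -> skel_reach P Q (3 * (r + alen l)).
Proof.
elim: l => [|s l IH] f x r Q reach /=.
  by rewrite Rplus_0_r; apply: skel_reach_of_boundary.
move=> [same [_ [_ p]]].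
have reach_s : boundary_reach (asf s) (asx s) r.
  case: same => [[<- <-] // | [u [_ [xu su]]]].
  exact: boundary_reach_of_skel (skel_reach_of_boundary reach xu) su.
by rewrite -Rplus_assoc; apply: IH (boundary_reach_move (asy s) reach_s) p.
Qed.

Lemma skel_reach_of_apath l Q : apath P l Q -> skel_reach P Q (3 * alen l).
Proof.
case: l => [|s l] /=; first by rewrite Rmult_0_r; apply: skel_reach_eq.
move=> [Ps [_ [_ p]]].
have reach_s : boundary_reach (asf s) (asx s) 0.
  apply: boundary_reach_of_skel Ps.
  by rewrite Rmult_0_r; apply: skel_reach_eq (skel_eq_refl P).
rewrite -[edist _ _ + _]Rplus_0_l -Rplus_assoc.
exact: skel_reach_of_apath_from (boundary_reach_move (asy s) reach_s) p.
Qed.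

End AffineToSkeleton.

Lemma skel_dist_le_of_aff (X : pcx) (P Q : skel X) r :
  aff_dist_le P Q r -> skel_dist_le P Q (3 * r).
Proof.
move=> dPQ eps eps_gt0.
have [al [p len]] := dPQ (eps / 3) ltac:(lra).
have [l [sp slen_le]] := skel_reach_of_apath p.
by exists l; split => //; lra.
Qed.

Lemma fp_at_skel_eq (X : pcx) (f : pF X) x (u u' : skel X) :
  fp_at_skel f x u -> skel_eq u u' -> fp_at_skel f x u'.
Proof.
move=> [i [s [s01 [xs us]]]] uu'.
by exists i, s; repeat split => //; apply: skel_eq_trans us uu'.
Qed.

Lemma edge_on_side (X : pcx) (a b : pV X) s t : adj a b -> 0 <= s <= 1 -> 0 <= t <= 1 ->
  exists g j s' t', 0 <= s' <= 1 /\ 0 <= t' <= 1 /\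
    fp_at_skel g (side_pt j s') (Sk a b s) /\ fp_at_skel g (side_pt j t') (Sk a b t) /\
    edist (side_pt j s') (side_pt j t') = Rabs (t - s).
Proof.
move=> [g [j [[ea eb] | [eb ea]]]] s01 t01.
  exists g, j, s, t; rewrite edist_side_pt.
  split; [lra | split; [lra | split; [| split => //]]].
  - by exists j, s; repeat split; try lra; rewrite ea eb; apply: skel_eq_refl.
  - by exists j, t; repeat split; try lra; rewrite ea eb; apply: skel_eq_refl.
exists g, j, (1 - s), (1 - t); rewrite edist_side_pt.
split; [lra | split; [lra | split; [| split]]].
- by exists j, (1 - s); repeat split; try lra; rewrite ea eb /skel_eq /=; skel_eq_case.
- by exists j, (1 - t); repeat split; try lra; rewrite ea eb /skel_eq /=; skel_eq_case.
- by rewrite -Rabs_Ropp; f_equal; ring.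
Qed.

Lemma apath_from_of_spath (X : pcx) (l : list (eseg X)) : forall f x (cur Q : skel X),
  skel_ok cur -> fp_at_skel f x cur -> spath cur l Q ->
  exists al, apath_from f x al Q /\ alen al = slen l.
Proof.
elim: l => [|e l IH] f x cur Q cur_ok xcur /=.
  by move=> curQ; exists nil; split => //=; apply: fp_at_skel_eq xcur curQ.
move=> [ab [s01 [t01 [cure p]]]].
have [g [j [s' [t' [s'01 [t'01 [gs [gt len]]]]]]]] := edge_on_side ab s01 t01.
have [al [pal alen_eq]] := IH _ _ (Sk (esa e) (esb e) (est e)) Q (conj ab t01) gt p.
exists (ASeg g (side_pt j s') (side_pt j t') :: al); split; last by rewrite /= alen_eq len.
split; last by split; [apply: in_pent_side_pt | split; [apply: in_pent_side_pt | ]].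
by right; exists cur; repeat split => //; apply: fp_at_skel_eq gs (skel_eq_sym cure).
Qed.

Lemma apath_of_spath (X : pcx) (l : list (eseg X)) (P Q : skel X) :
  spath P l Q -> exists al, apath P al Q /\ alen al = slen l.
Proof.
case: l => [|e l] /=; first by exists nil.
move=> [ab [s01 [t01 [Pe p]]]].
have [g [j [s' [t' [s'01 [t'01 [gs [gt len]]]]]]]] := edge_on_side ab s01 t01.
have [al [pal alen_eq]] :=
  apath_from_of_spath (cur := Sk (esa e) (esb e) (est e)) (conj ab t01) gt p.
exists (ASeg g (side_pt j s') (side_pt j t') :: al); split; last by rewrite /= alen_eq len.
split; first by apply: fp_at_skel_eq gs (skel_eq_sym Pe).
by split; [apply: in_pent_side_pt | split; [apply: in_pent_side_pt | ]].
Qed.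

Lemma aff_dist_le_of_skel (X : pcx) (P Q : skel X) r :
  skel_dist_le P Q r -> aff_dist_le P Q r.
Proof.
move=> dPQ eps eps_gt0; have [l [p len]] := dPQ eps eps_gt0.
by have [al [pal alen_eq]] := apath_of_spath p; exists al; rewrite alen_eq.
Qed.

Theorem corollary2p3 (L : pcx) (HL : comb_tiling L) (Hloc : loc_iso_K L)
  (v w : pV L) (Hvw : adj v w) (n : nat) (Hn : (0 < n)%nat) :
  (forall u, ball_d' v w (INR n) u -> ball_d v w (INR n) u) /\
  (forall u, ball_d v w (INR n) u -> ball_d' v w (3 * INR n) u).
Proof.
split=> u [u_ok d_vu]; split=> //.
  exact: aff_dist_le_of_skel.
exact: skel_dist_le_of_aff.
Qed.
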